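(* Let $\mathbf{x}$ be an amalgamation try, $G_\ell = G_{\mathbf{x},\ell}$ for $\ell = 0,1,2$, and $G_3 = G_{\mathbf{x}}$. Let $H_1$ be a subgroup of $G_1$, $H_0 = H_1 \cap G_0$, $H_1' = \mathbf{j}_{\mathbf{x},1}(H_1)$, and $\mathbf{I}_1 = \mathbf{I}_{\mathbf{x},1} \cap H_1$. Let $H_2$ be a subgroup of $G_2$, $H_2' = \mathbf{j}_{\mathbf{x},2}(H_2)$ and $\mathbf{I}_2 = \mathbf{I}_{\mathbf{x},2} \cap H_2$. Assume: (e) $H_1 = \bigcup\{bH_0 : b \in \mathbf{I}_1\}$; (f) if $g \in \mathbf{I}_{\mathbf{x},1}$ and $b \in \mathbf{I}_1$ then $gb \in \mathbf{I}_{\mathbf{x},1}$; (g) the subgroups $G_0$ and $H_1$ of $G_1$ commute elementwise; (h) $H_2$ commutes elementwise with $H_0$ in $G_2$; (i) $H_2 = \bigcup\{bH_0 : b \in \mathbf{I}_2\}$. Then the subgroups $H_1'$ and $H_2'$ of $G_3$ commute elementwise.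
   Context: A group is locally finite if every finitely generated subgroup is finite. An amalgamation try is $\mathbf{x} = (G_{\mathbf{x},0},G_{\mathbf{x},1},G_{\mathbf{x},2},\mathbf{I}_{\mathbf{x},1},\mathbf{I}_{\mathbf{x},2})$ where $G_{\mathbf{x},1},G_{\mathbf{x},2}$ are locally finite groups with common subgroup $G_{\mathbf{x},0}$, $\mathbf{I}_{\mathbf{x},\ell}$ is a set of representatives (without repetition) of the left cosets of $G_{\mathbf{x},0}$ in $G_{\mathbf{x},\ell}$, and $e \in \mathbf{I}_{\mathbf{x},1}\cap\mathbf{I}_{\mathbf{x},2}$. With $\mathcal{U}_{\mathbf{x}} = \{(g_0,g_1,g_2): g_0 \in G_{\mathbf{x},0}, g_\ell \in \mathbf{I}_{\mathbf{x},\ell}\}$, for $g \in G_{\mathbf{x},1}$ the permutation $\mathbf{j}_{\mathbf{x},1}(g)$ maps $(g_0,g_1,g_2)$ to $(g_0',g_1',g_2)$ where $(g_1',g_0') \in \mathbf{I}_{\mathbf{x},1}\times G_{\mathbf{x},0}$ is unique with $g_1'g_0' = g_1g_0g$; symmetrically $\mathbf{j}_{\mathbf{x},2}(g)$ for $g \in G_{\mathbf{x},2}$ maps $(g_0,g_1,g_2)$ to $(g_0',g_1,g_2')$ with $g_2'g_0' = g_2g_0g$. Permutations act on the right (product $f_1f_2$ is $u \mapsto f_2(f_1(u))$) and $G_{\mathbf{x}}$ is the permutation group on $\mathcal{U}_{\mathbf{x}}$ generated by $\mathbf{j}_{\mathbf{x},1}(G_{\mathbf{x},1}) \cup \mathbf{j}_{\mathbf{x},2}(G_{\mathbf{x},2})$.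 *)

From Stdlib Require Import List ClassicalEpsilon.
Set Implicit Arguments.

Record group := Group {
  carrier :> Type;
  gmul : carrier -> carrier -> carrier;
  ginv : carrier -> carrier;
  gone : carrier;
  gmulA : forall x y z, gmul x (gmul y z) = gmul (gmul x y) z;
  gmul1 : forall x, gmul gone x = x;
  gmulV : forall x, gmul (ginv x) x = gone
}.

Arguments gmul {g}.
Arguments ginv {g}.
Arguments gone {g}.

Definition is_subgroup (G : group) (H : G -> Prop) : Prop :=
  H gone /\ (forall x y, H x -> H y -> H (gmul x y)) /\ (forall x, H x -> H (ginv x)).

Inductive generated (G : group) (l : list G) : G -> Prop :=
| gen_in : forall x, In x l -> @generated G l x
| gen_one : @generated G l gone
| gen_mul : forall x y, @generated G l x -> @generated G l y -> @generated G l (gmul x y)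
| gen_inv : forall x, @generated G l x -> @generated G l (ginv x).

Definition locally_finite (G : group) : Prop :=
  forall l : list G, exists s : list G, forall x, @generated G l x -> In x s.

Definition is_hom (A B : group) (f : A -> B) : Prop :=
  forall x y, f (gmul x y) = gmul (f x) (f y).

(* I is a set of representatives, without repetition, of the left cosets
   g G0 of the subgroup G0 (embedded into G by i) *)
Definition left_transversal (G0 G : group) (i : G0 -> G) (I : G -> Prop) : Prop :=
  forall g : G, exists! r : G, I r /\ exists h : G0, r = gmul g (i h).

Definition decomp (G0 G : group) (i : G0 -> G) (I : G -> Prop) (x : G) : G * G0 :=
  epsilon (inhabits (@gone G, @gone G0))
          (fun p => I (fst p) /\ gmul (fst p) (i (snd p)) = x).

(* U_x is represented by triples (g0, g1, g2) with g1 in I1, g2 in I2 *)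
Definition in_U (G0 G1 G2 : group) (I1 : G1 -> Prop) (I2 : G2 -> Prop)
  (u : G0 * G1 * G2) : Prop :=
  let '(g0, g1, g2) := u in I1 g1 /\ I2 g2.

(* j_{x,1}(g) : (g0,g1,g2) |-> (g0',g1',g2) with g1' g0' = g1 g0 g *)
Definition j1 (G0 G1 G2 : group) (i1 : G0 -> G1) (I1 : G1 -> Prop) (g : G1)
  (u : G0 * G1 * G2) : G0 * G1 * G2 :=
  let '(g0, g1, g2) := u in
  let p := @decomp G0 G1 i1 I1 (gmul (gmul g1 (i1 g0)) g) in
  (snd p, fst p, g2).

(* j_{x,2}(g) : (g0,g1,g2) |-> (g0',g1,g2') with g2' g0' = g2 g0 g *)
Definition j2 (G0 G1 G2 : group) (i2 : G0 -> G2) (I2 : G2 -> Prop) (g : G2)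
  (u : G0 * G1 * G2) : G0 * G1 * G2 :=
  let '(g0, g1, g2) := u in
  let p := @decomp G0 G2 i2 I2 (gmul (gmul g2 (i2 g0)) g) in
  (snd p, g1, fst p).

Arguments is_subgroup {G}.
Arguments is_hom {A B}.
Arguments left_transversal {G0 G}.
Arguments decomp {G0 G}.
Arguments in_U {G0 G1 G2}.
Arguments j1 {G0 G1 G2}.
Arguments j2 {G0 G1 G2}.

(* Write h1 in H1 as b * h with b in I1 and h in H0.  Since G0 commutes with
   H1 and I1x is closed under right multiplication by I1, j1(h1) acts on a
   triple by (g0, g1, g2) |-> (g0 h, g1 b, g2).  Since H2 commutes with H0,
   j2(h2) commutes with right multiplication of the first coordinate by h, and
   it does not touch the second coordinate; hence the two actions commute. *)
From Stdlib Require Import ClassicalEpsilon.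

Set Implicit Arguments.

Arguments gmul1 {g}.
Arguments gmulA {g}.
Arguments gmulV {g}.

Section GroupFacts.

Variable G : group.

Lemma gmul_invr (x : G) : gmul x (ginv x) = gone.
Proof.
  rewrite <- (gmul1 (gmul x (ginv x))), <- (gmulV (ginv x)) at 1.
  rewrite <- gmulA, (gmulA (ginv x) x (ginv x)), gmulV, gmul1, gmulV.
  reflexivity.
Qed.

Lemma gmul1r (x : G) : gmul x gone = x.
Proof. rewrite <- (gmulV x), gmulA, gmul_invr, gmul1. reflexivity. Qed.

Lemma gmulI (a x y : G) : gmul a x = gmul a y -> x = y.
Proof.
  intro E. rewrite <- (gmul1 x), <- (gmul1 y), <- (gmulV a), <- !gmulA, E.
  reflexivity.
Qed.

End GroupFacts.

Arguments gmul_invr {G}.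
Arguments gmul1r {G}.
Arguments gmulI {G}.

Section Homomorphism.

Variables (A B : group) (f : A -> B).
Hypothesis hom_f : is_hom f.

Lemma hom1 : f gone = gone.
Proof. apply (gmulI (f gone)). rewrite <- hom_f, gmul1, gmul1r. reflexivity. Qed.

Lemma homV (k : A) : f (ginv k) = ginv (f k).
Proof. apply (gmulI (f k)). rewrite <- hom_f, !gmul_invr. exact hom1. Qed.

End Homomorphism.

Section Decomposition.

Variables (G0 G : group) (i : G0 -> G) (I : G -> Prop).
Hypothesis hom_i : is_hom i.
Hypothesis inj_i : forall a b, i a = i b -> a = b.
Hypothesis tr : left_transversal i I.

Lemma decomp_spec (x : G) :
  I (fst (decomp i I x)) /\ gmul (fst (decomp i I x)) (i (snd (decomp i I x))) = x.
Proof.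
  unfold decomp. apply epsilon_spec.
  destruct (tr x) as [r [[Ir [h Eh]] _]].
  exists (r, ginv h). split; simpl; [exact Ir |].
  rewrite Eh, homV, <- gmulA, gmul_invr, gmul1r by exact hom_i. reflexivity.
Qed.

Lemma decomp_unique (x r : G) (k : G0) :
  I r -> gmul r (i k) = x -> decomp i I x = (r, k).
Proof.
  intros Ir E.
  destruct (decomp_spec x) as [Ip Ep].
  destruct (decomp i I x) as [p k']; simpl in Ip, Ep.
  destruct (tr x) as [r0 [_ Uniq]].
  (* both representatives lie in the coset x G0, so they are the transversal's *)
  assert (in_coset : forall q c, gmul q (i c) = x -> q = gmul x (i (ginv c))).
  { intros q c Eq. rewrite <- Eq, homV, <- gmulA, gmul_invr, gmul1r by exact hom_i.
    reflexivity. }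
  assert (Ep0 : r0 = p) by (apply Uniq; split; eauto).
  assert (Er0 : r0 = r) by (apply Uniq; split; eauto).
  subst. f_equal. apply inj_i, (gmulI r). congruence.
Qed.

Lemma decomp_mulr (x : G) (h : G0) :
  decomp i I (gmul x (i h)) =
  (fst (decomp i I x), gmul (snd (decomp i I x)) h).
Proof.
  destruct (decomp_spec x) as [Ip Ep].
  apply decomp_unique; [exact Ip |].
  rewrite hom_i, gmulA, Ep. reflexivity.
Qed.

End Decomposition.

Lemma j1_coset_rep {G0 G1 G2 : group} (i1 : G0 -> G1) (I1 : G1 -> Prop)
  (hom_i1 : is_hom i1) (inj_i1 : forall a b, i1 a = i1 b -> a = b)
  (tr1 : left_transversal i1 I1) (g0 h : G0) (g1 b : G1) (g2 : G2) :
  I1 (gmul g1 b) -> gmul (i1 g0) b = gmul b (i1 g0) ->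
  j1 i1 I1 (gmul b (i1 h)) (g0, g1, g2) = (gmul g0 h, gmul g1 b, g2).
Proof.
  intros I1g1b Cb. unfold j1.
  rewrite (decomp_unique hom_i1 inj_i1 tr1 _ (gmul g0 h) I1g1b); [reflexivity |].
  rewrite hom_i1, !gmulA, <- (gmulA g1 b), <- Cb, gmulA. reflexivity.
Qed.

Lemma j2_mulr {G0 G1 G2 : group} (i2 : G0 -> G2) (I2 : G2 -> Prop)
  (hom_i2 : is_hom i2) (inj_i2 : forall a b, i2 a = i2 b -> a = b)
  (tr2 : left_transversal i2 I2) (g0 h : G0) (g1 : G1) (g2 x : G2) :
  gmul (i2 h) x = gmul x (i2 h) ->
  j2 i2 I2 x (gmul g0 h, g1, g2) =
  let '(a, c, d) := j2 i2 I2 x (g0, g1, g2) in (gmul a h, c, d).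
Proof.
  intro Cx. unfold j2.
  rewrite hom_i2, <- !gmulA, Cx, !gmulA.
  rewrite (decomp_mulr hom_i2 inj_i2 tr2). reflexivity.
Qed.

Theorem claim4p1
  (G0 G1 G2 : group)
  (i1 : G0 -> G1) (i2 : G0 -> G2)
  (hom_i1 : is_hom i1) (inj_i1 : forall a b, i1 a = i1 b -> a = b)
  (hom_i2 : is_hom i2) (inj_i2 : forall a b, i2 a = i2 b -> a = b)
  (lf1 : locally_finite G1) (lf2 : locally_finite G2)
  (I1x : G1 -> Prop) (I2x : G2 -> Prop)
  (tr1 : left_transversal i1 I1x) (tr2 : left_transversal i2 I2x)
  (e1 : I1x gone) (e2 : I2x gone)
  (H1 : G1 -> Prop) (H2 : G2 -> Prop)
  (sH1 : is_subgroup H1) (sH2 : is_subgroup H2)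
  (* H0 = H1 ∩ G0, I1 = I1x ∩ H1, I2 = I2x ∩ H2 *)
  (he : forall x : G1, H1 x <->
          exists (b : G1) (h : G0), (I1x b /\ H1 b) /\ H1 (i1 h) /\ x = gmul b (i1 h))
  (hf : forall g b : G1, I1x g -> (I1x b /\ H1 b) -> I1x (gmul g b))
  (hg : forall (a : G0) (h : G1), H1 h -> gmul (i1 a) h = gmul h (i1 a))
  (hh : forall (a : G0) (h : G2), H1 (i1 a) -> H2 h -> gmul (i2 a) h = gmul h (i2 a))
  (hi : forall x : G2, H2 x <->
          exists (b : G2) (h : G0), (I2x b /\ H2 b) /\ H1 (i1 h) /\ x = gmul b (i2 h)) :
  forall (h1 : G1) (h2 : G2), H1 h1 -> H2 h2 ->
  forall u : G0 * G1 * G2, in_U I1x I2x u ->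
    j2 i2 I2x h2 (j1 i1 I1x h1 u) = j1 i1 I1x h1 (j2 i2 I2x h2 u).
Proof.
  intros h1 h2 H1h1 H2h2 [[g0 g1] g2] [I1g1 _].
  destruct (proj1 (he h1) H1h1) as (b & h & [I1b H1b] & H1h & ->).
  assert (I1g1b : I1x (gmul g1 b)) by (apply hf; auto).
  rewrite (j1_coset_rep hom_i1 inj_i1 tr1) by auto.
  rewrite (j2_mulr hom_i2 inj_i2 tr2) by auto.
  unfold j2; destruct (decomp i2 I2x _) as [r k].
  rewrite (j1_coset_rep hom_i1 inj_i1 tr1) by auto.
  reflexivity.
Qed.
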